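(* Let $\vartheta=\vartheta_{B_3}^{\mathcal B,h}$ be a $3$-molecule. Then $\vartheta$ is ambiguous if and only if one of the following holds: (I) $|\mathcal B|=3$ and $h=1$ (i.e. $\vartheta$ is $K_4$); (II) $|\mathcal B|=2$ and $h=2$; (III) $|\mathcal B|=0$ and $h=3$ (i.e. $\vartheta$ is $K_{3,3}$).
   Context: Graphs are finite and undirected. The connectivity of a graph is the largest $k$ such that one must remove at least $k$ vertices to disconnect it (by convention $K_m$, $m\ge3$, has connectivity $m-1$). $k$-molecule: for $k,h\ge1$, $B_k=\{b_1,\dots,b_k\}$ and a set $\mathcal B$ of edges among vertices of $B_k$, $\vartheta_{B_k}^{\mathcal B,h}$ is the graph with vertex set $B_k\cup\{v_1,\dots,v_h\}$ and edge set $\mathcal B\cup\{v_ib_j:1\le i\le h,1\le j\le k\}$, where it is required that $h\ge k-k'$, $k'$ being the connectivity of the subgraph induced by $B_k$. For a graph $G$ and $B\subseteq V_G$ with $|B|=k$, $(G,B)$ is a $k$-premolecule if there is a $k$-molecule $\vartheta_{B_k}^{\mathcal B,h}$ and an isomorphism $G\to\vartheta_{B_k}^{\mathcal B,h}$ mapping $B$ onto $B_k$. An abstract $k$-molecule $G$ is non ambiguous if there is exactly one $B\subseteq V_G$ such that $(G,B)$ is a $k$-premolecule, and ambiguous otherwise; a $k$-molecule is (non) ambiguous if it is so as a graph. *)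

From mathcomp Require Import all_boot.
Set Implicit Arguments. Unset Strict Implicit. Unset Printing Implicit Defensive.

Definition simple_graph (T : finType) (e : rel T) : Prop :=
  symmetric e /\ irreflexive e.

Definition induced_rel (T : finType) (e : rel T) (A : {set T}) : rel T :=
  [rel x y | [&& e x y, x \in A & y \in A]].

Definition connected_on (T : finType) (e : rel T) (A : {set T}) : bool :=
  [forall x in A, forall y in A, connect (induced_rel e A) x y].

(* Removing S from the induced subgraph on A leaves a disconnected graph or
   a graph with at most one vertex (the K_m convention). *)
Definition separating (T : finType) (e : rel T) (A S : {set T}) : bool :=
  (S \subset A) && ((#|A :\: S| <= 1) || ~~ connected_on e (A :\: S)).

(* S = A is always separating, so #|A| is a valid default. *)
Definition connectivity (T : finType) (e : rel T) (A : {set T}) : nat :=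
  \big[minn/#|A|]_(S in powerset A | separating e A S) #|S|.

Definition edges_rel (k : nat) (bB : {set {set 'I_k}}) : rel 'I_k :=
  [rel i j | (i != j) && ([set i; j] \in bB)].

(* The graph theta_{B_k}^{bB,h} on the vertex type 'I_k + 'I_h:
   inl i = b_(i+1), inr j = v_(j+1). *)
Definition molecule_rel (k h : nat) (bB : {set {set 'I_k}}) : rel ('I_k + 'I_h) :=
  fun x y =>
    match x, y with
    | inl i, inl j => edges_rel bB i j
    | inl _, inr _ => true
    | inr _, inl _ => true
    | inr _, inr _ => false
    end.
Arguments molecule_rel {k} h bB.

Definition is_molecule (k h : nat) (bB : {set {set 'I_k}}) : Prop :=
  [/\ 1 <= k, 1 <= h, (forall E, E \in bB -> #|E| = 2)
    & k - connectivity (edges_rel bB) [set: 'I_k] <= h].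
Arguments is_molecule : clear implicits.

Definition premolecule (T : finType) (e : rel T) (k : nat) (B : {set T}) : Prop :=
  #|B| = k /\
  exists (h : nat) (bB : {set {set 'I_k}}) (f : T -> 'I_k + 'I_h),
    [/\ is_molecule k h bB, bijective f,
        (forall x y, e x y = molecule_rel h bB (f x) (f y))
      & f @: B = [set inl i | i : 'I_k]].

Definition ambiguous (T : finType) (e : rel T) (k : nat) : Prop :=
  ~ (exists! B : {set T}, premolecule e k B).

From mathcomp Require Import all_boot order zify.
From Stdlib Require Import Classical.
Set Implicit Arguments. Unset Strict Implicit. Unset Printing Implicit Defensive.

(* Vertices outside a premolecule B are pairwise nonadjacent and adjacent to
   all of B, and B is a clique when only one vertex lies outside it (then the
   connectivity of B is at least #|B| - 1).  A premolecule other than the base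
   B_3 contains some added vertex v_j, hence all of them, so its complement is
   a set M of h base vertices: for k = 3 this forces the edges of B_3 to be
   those of K_3 minus the clique on M, i.e. 3, 2 or 0 edges for h = 1, 2, 3.
   Conversely, for these edge sets exchanging M with {v_1, ..., v_h} is an
   automorphism, which moves B_3 to a second premolecule. *)

Lemma connectivity_le (T : finType) (e : rel T) (A S : {set T}) :
  S \subset A -> separating e A S -> connectivity e A <= #|S|.
Proof.
by move=> sSA sepS; apply: (@Order.TotalTheory.bigmin_le_cond _ nat); rewrite powersetE sSA.
Qed.

Lemma connectivity_nonadjacent (T : finType) (e : rel T) (A : {set T}) x y :
  x \in A -> y \in A -> x != y -> ~~ e x y -> ~~ e y x ->
  connectivity e A <= #|A| - 2.
Proof.
move=> xA yA neq_xy nexy neyx.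
have xyA : [set x; y] \subset A by rewrite subUset !sub1set xA yA.
have AxyA : A :\: (A :\: [set x; y]) = [set x; y].
  by rewrite setDDr setDv set0U; apply/setIidPr.
have x_closed : closed (induced_rel e [set x; y]) (pred1 x).
  move=> u v /and3P[euv]; rewrite !inE => /orP[]/eqP Eu /orP[]/eqP Ev; subst u v.
  - by [].
  - by rewrite (negbTE nexy) in euv.
  - by rewrite (negbTE neyx) in euv.
  - by [].
have sep : separating e A (A :\: [set x; y]).
  rewrite /separating subsetDl AxyA cards2 neq_xy /=.
  apply/negP=> /forallP/(_ x)/implyP/(_ (set21 _ _))/forallP/(_ y)/implyP/(_ (set22 _ _)).
  by move/(closed_connect x_closed); rewrite !inE eqxx eq_sym (negbTE neq_xy).
apply: leq_trans (connectivity_le (subsetDl _ _) sep) _.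
by rewrite cardsD (setIidPr xyA) cards2 neq_xy.
Qed.

Lemma edges_rel_sym (k : nat) (bB : {set {set 'I_k}}) : symmetric (edges_rel bB).
Proof. by move=> i j; rewrite /edges_rel /= eq_sym setUC. Qed.

Lemma molecule_complete (k : nat) (bB : {set {set 'I_k}}) (i j : 'I_k) :
  is_molecule k 1 bB -> i != j -> edges_rel bB i j.
Proof.
case=> _ _ _ conn_ge neq_ij; apply/negPn/negP=> ne_ij.
have := @connectivity_nonadjacent _ _ [set: 'I_k] i j (in_setT i) (in_setT j) neq_ij ne_ij.
rewrite edges_rel_sym => /(_ ne_ij); rewrite cardsT card_ord.
have : (i : nat) != j by [].
have := ltn_ord i; have := ltn_ord j; move: conn_ge.
(* the two connectivity terms differ in their finType instance, so lia would
   take them for distinct atoms *)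
move: (connectivity _ _) => c; lia.
Qed.

Lemma premolecule_adjacency (T : finType) (e : rel T) (k : nat) (B : {set T}) :
  premolecule e k B ->
  [/\ {in ~: B &, forall x y, ~~ e x y}, {in ~: B & B, forall x y, e x y}
    & #|~: B| = 1 -> {in B &, forall x y, x != y -> e x y}].
Proof.
case=> cardB [h [bB [f [mol f_bij e_f fB]]]].
have f_inj := bij_inj f_bij.
have inB x : (x \in B) = (f x \in [set inl i | i : 'I_k]) by rewrite -fB mem_imset.
have [inl_in inr_out] : (forall x, x \in B -> exists i, f x = inl i)
                       /\ (forall x, x \notin B -> exists j, f x = inr j).
  split=> x; rewrite inB; case: (f x) => [i|j].
  - by exists i.
  - by case/imsetP.
  - by rewrite imset_f.
  - by exists j.
split.
- move=> x y; rewrite !inE => /inr_out[i fx] /inr_out[j fy].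
  by rewrite e_f fx fy.
- move=> x y; rewrite inE => /inr_out[i fx] /inl_in[j fy].
  by rewrite e_f fx fy.
move=> card_out x y /inl_in[i fx] /inl_in[j fy] neq_xy.
have h1 : h = 1.
  move: card_out; rewrite cardsCs setCK.
  by rewrite (bij_eq_card f_bij) card_sum !card_ord cardB; lia.
rewrite e_f fx fy /=; apply: molecule_complete; first by rewrite -h1.
by apply: contra neq_xy => /eqP eq_ij; apply/eqP/f_inj; rewrite fx fy eq_ij.
Qed.

Lemma premolecule_automorphism (T : finType) (e : rel T) (k : nat) (B : {set T})
    (f : T -> T) :
  premolecule e k B -> bijective f -> (forall x y, e (f x) (f y) = e x y) ->
  premolecule e k (f @: B).
Proof.
case=> cardB [h [bB [g [mol g_bij e_g gB]]]] f_bij e_f.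
have [f' fK f'K] := f_bij.
split; first by rewrite card_imset //; apply: bij_inj.
exists h, bB, (g \o f'); split=> //.
- exact: bij_comp g_bij (bij_can_bij f_bij fK).
- by move=> x y; rewrite -e_g -[in LHS](f'K x) -[in LHS](f'K y) e_f.
- by rewrite -imset_comp -gB; apply: eq_imset => x /=; rewrite fK.
Qed.

Definition molecule_base (k h : nat) : {set 'I_k + 'I_h} := [set inl i | i : 'I_k].

Lemma card_molecule_base (k h : nat) : #|molecule_base k h| = k.
Proof. by rewrite card_imset ?cardsT ?card_ord //; apply: inl_inj. Qed.

Lemma premolecule_base (k h : nat) (bB : {set {set 'I_k}}) :
  is_molecule k h bB -> premolecule (molecule_rel h bB) k (molecule_base k h).
Proof.
move=> mol; split; first exact: card_molecule_base.
by exists h, bB, id; split=> //; [exists id | rewrite imset_id].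
Qed.

Lemma ambiguous_moleculeP (k h : nat) (bB : {set {set 'I_k}}) :
  is_molecule k h bB ->
  ambiguous (molecule_rel h bB) k <->
  exists2 B, premolecule (molecule_rel h bB) k B & B != molecule_base k h.
Proof.
move=> mol; have base := premolecule_base mol; split.
- move=> amb; apply: NNPP => no_other; apply: amb.
  exists (molecule_base k h); split=> // B premB.
  by apply: NNPP=> neqB; apply: no_other; exists B => //; apply/eqP=> eqB; apply: neqB.
- case=> B premB neqB [B0 [_ uniqB0]].
  by move: neqB; rewrite -(uniqB0 _ base) (uniqB0 _ premB) eqxx.
Qed.

Lemma premolecule_off_base (k h : nat) (bB : {set {set 'I_k}}) (B : {set 'I_k + 'I_h}) :
  premolecule (molecule_rel h bB) k B -> B != molecule_base k h ->
  exists M : {set 'I_k},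
    [/\ #|M| = h, {in M &, forall i j, ~~ edges_rel bB i j},
        {in M & ~: M, forall i j, edges_rel bB i j}
      & h = 1 -> {in ~: M &, forall i j, i != j -> edges_rel bB i j}].
Proof.
move=> premB neqB; have [indep join clique] := premolecule_adjacency premB.
have cardB : #|B| = k by case: premB.
have [v vB] : exists v, inr v \in B.
  have : ~~ (B \subset molecule_base k h).
    by apply: contra neqB => sub; rewrite eqEcard sub card_molecule_base cardB /=.
  by case/subsetPn=> [[i|v] vB]; rewrite ?imset_f // => _; exists v.
have inr_in j : inr j \in B.
  by apply/negPn/negP=> jB; have := join (inr j) (inr v); rewrite inE => /(_ jB vB).
set M := [set i | inl i \notin B].
have outB : ~: B = inl @: M.
  apply/setP=> [[i|j]]; rewrite !inE ?inr_in.
  - by rewrite mem_imset ?inE //; apply: inl_inj.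
  - by apply/esym/imsetP=> -[].
have cardM : #|M| = h.
  have := cardsC B; rewrite outB card_imset; last exact: inl_inj.
  by rewrite card_sum !card_ord cardB; lia.
have inM i : (i \in M) = (inl i \in ~: B) by rewrite !inE.
have notinM i : (i \in ~: M) = (inl i \in B) by rewrite !inE negbK.
exists M; split=> //.
- by move=> i j; rewrite !inM; apply: indep.
- by move=> i j; rewrite inM notinM; apply: join.
move=> h1 i j; rewrite !notinM => iB jB neq_ij.
apply: (clique _ (inl i) (inl j)) => //.
by rewrite outB card_imset ?cardM //; apply: inl_inj.
Qed.

Definition complete_minus_clique (T : finType) (M : {set T}) : {set {set T}} :=
  [set E : {set T} | (#|E| == 2) && ~~ (E \subset M)].

Lemma edges_complete_minus_clique (k : nat) (M : {set 'I_k}) (i j : 'I_k) :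
  edges_rel (complete_minus_clique M) i j = (i != j) && ~~ ((i \in M) && (j \in M)).
Proof.
rewrite /edges_rel /= inE subUset !sub1set.
by have [//|neq_ij] := eqVneq i j; rewrite cards2 neq_ij.
Qed.

Lemma edges_rel_inj (k : nat) (bB bB' : {set {set 'I_k}}) :
  (forall E, E \in bB -> #|E| = 2) -> (forall E, E \in bB' -> #|E| = 2) ->
  edges_rel bB =2 edges_rel bB' -> bB = bB'.
Proof.
move=> pairs pairs' eq_edges; apply/setP=> E.
case: (boolP (#|E| == 2)) => [/cards2P[i [j [neq_ij ->]]]|not_pair].
  by have := eq_edges i j; rewrite /edges_rel /= neq_ij.
by apply/idP/idP=> [/pairs|/pairs'] cardE; rewrite cardE eqxx in not_pair.
Qed.

Lemma card_complete_minus_clique (T : finType) (M : {set T}) :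
  #|complete_minus_clique M| = 'C(#|T|, 2) - 'C(#|M|, 2).
Proof.
have -> : complete_minus_clique M =
          [set E : {set T} | #|E| == 2] :\: [set E : {set T} | E \subset M & #|E| == 2].
  by apply/setP=> E; rewrite !inE; case: (#|E| == 2); case: (E \subset M).
rewrite cardsDS ?card_draws ?cards_draws //.
by apply/subsetP=> E; rewrite !inE => /andP[].
Qed.

Lemma eq_complete_minus_clique_card (T : finType) (M : {set T}) (bB : {set {set T}}) :
  (forall E, E \in bB -> #|E| = 2) -> (forall E, E \in bB -> ~~ (E \subset M)) ->
  #|bB| = 'C(#|T|, 2) - 'C(#|M|, 2) -> bB = complete_minus_clique M.
Proof.
move=> pairs outM cardB; apply/eqP.
rewrite eqEcard card_complete_minus_clique cardB leqnn andbT.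
by apply/subsetP=> E EB; rewrite inE pairs ?outM.
Qed.

Lemma ambiguous3_complete_minus_clique (h : nat) (bB : {set {set 'I_3}}) :
  is_molecule 3 h bB -> ambiguous (molecule_rel h bB) 3 ->
  exists2 M : {set 'I_3}, #|M| = h & bB = complete_minus_clique M.
Proof.
move=> mol /(ambiguous_moleculeP mol)[B premB neqB].
have [M [cardM indep join clique]] := premolecule_off_base premB neqB.
have [_ h_gt0 pairs _] := mol.
exists M => //; apply: edges_rel_inj => // [E|i j]; first by rewrite inE => /andP[/eqP].
rewrite edges_complete_minus_clique.
have [<-|neq_ij] := eqVneq i j; first by rewrite /edges_rel /= eqxx.
case iM: (i \in M); case jM: (j \in M) => /=.
- by apply/negbTE/indep.
- by apply: join; rewrite ?inE ?jM.
- by rewrite edges_rel_sym; apply: join; rewrite ?inE ?iM.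
have ijC : [set i; j] \subset ~: M by rewrite subUset !sub1set !inE iM jM.
have := subset_leq_card ijC; rewrite cards2 neq_ij cardsCs setCK card_ord cardM.
move=> card_ge; apply: clique; rewrite ?inE ?iM ?jM //; lia.
Qed.

Section CliqueSwap.

Variables (k h : nat) (g : 'I_h -> 'I_k).
Hypothesis g_inj : injective g.

Local Notation M := (g @: [set: 'I_h]).

Definition clique_swap (x : 'I_k + 'I_h) : 'I_k + 'I_h :=
  match x with
  | inl i => if [pick j | g j == i] is Some j then inr j else inl i
  | inr j => inl (g j)
  end.

Variant clique_swap_inl_spec (i : 'I_k) : 'I_k + 'I_h -> bool -> Type :=
  | CliqueSwapIn j of i = g j : clique_swap_inl_spec i (inr j) true
  | CliqueSwapOut of i \notin M : clique_swap_inl_spec i (inl i) false.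

Lemma clique_swap_inlP (i : 'I_k) : clique_swap_inl_spec i (clique_swap (inl i)) (i \in M).
Proof.
rewrite /=; case: pickP => [j /eqP gj|no_j].
  by rewrite -gj imset_f //; constructor.
have iM : i \notin M by apply/imsetP=> -[j _ ij]; have := no_j j; rewrite ij eqxx.
by rewrite (negbTE iM); constructor.
Qed.

Lemma clique_swap_g (j : 'I_h) : clique_swap (inl (g j)) = inr j.
Proof.
by case: clique_swap_inlP => [j' /g_inj-> //|]; rewrite imset_f.
Qed.

Lemma clique_swapK : involutive clique_swap.
Proof.
case=> [i|j]; last exact: clique_swap_g.
case: (clique_swap_inlP i) => [j ->|]; first by [].
by case: (clique_swap_inlP i).
Qed.

(* [None] marks the clique [~: M], [Some true] the co-clique [M] and
   [Some false] the [h] vertices outside [B_k]; clique_swap exchanges the last two. *)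
Definition clique_swap_class (x : 'I_k + 'I_h) : option bool :=
  if x is inl i then (if i \in M then Some true else None) else Some false.

Lemma molecule_rel_complete_minus_clique (x y : 'I_k + 'I_h) :
  molecule_rel h (complete_minus_clique M) x y =
  (x != y) && ((clique_swap_class x == None)
               || (clique_swap_class x != clique_swap_class y)).
Proof.
case: x y => [i|a] [j|b] /=.
- rewrite edges_complete_minus_clique (inj_eq inl_inj).
  by case: (i \in M); case: (j \in M); rewrite ?andbT ?andbF.
- by case: (i \in M).
- by case: (j \in M).
- by rewrite andbF.
Qed.

Lemma clique_swap_classE (x : 'I_k + 'I_h) :
  clique_swap_class (clique_swap x) = omap negb (clique_swap_class x).
Proof.
case: x => [i|j]; last by rewrite /= imset_f.
by rewrite [in RHS]/=; case: (clique_swap_inlP i) => //= iM; rewrite (negbTE iM).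
Qed.

Lemma clique_swap_automorphism (x y : 'I_k + 'I_h) :
  molecule_rel h (complete_minus_clique M) (clique_swap x) (clique_swap y) =
  molecule_rel h (complete_minus_clique M) x y.
Proof.
rewrite !molecule_rel_complete_minus_clique (inj_eq (inv_inj clique_swapK)).
rewrite !clique_swap_classE.
by case: (clique_swap_class x) (clique_swap_class y) => [[]|] [[]|].
Qed.

Lemma complete_minus_clique_ambiguous (bB : {set {set 'I_k}}) :
  is_molecule k h bB -> bB = complete_minus_clique M -> ambiguous (molecule_rel h bB) k.
Proof.
move=> mol bB_def; have [_ h_gt0 _ _] := mol.
apply/(ambiguous_moleculeP mol); exists (clique_swap @: molecule_base k h).
  apply: premolecule_automorphism (premolecule_base mol) (inv_bij clique_swapK) _.
  by rewrite bB_def; apply: clique_swap_automorphism.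
apply/negP=> /eqP base_fixed; pose j0 := Ordinal h_gt0.
have : inr j0 \in clique_swap @: molecule_base k h.
  by rewrite -clique_swap_g; apply/imset_f/imset_f.
by rewrite base_fixed => /imsetP[].
Qed.

End CliqueSwap.

Lemma imset_enum_val (T : finType) (A : {set T}) :
  [set enum_val i | i in [set: 'I_#|A|]] = A.
Proof.
apply/setP=> x; apply/imsetP/idP=> [[i _ ->]|xA]; first exact: enum_valP.
by exists (enum_rank_in xA x); rewrite ?in_setT ?enum_rankK_in.
Qed.

Lemma ambiguous_of_complete_minus_clique (k h : nat) (bB : {set {set 'I_k}})
    (M : {set 'I_k}) :
  is_molecule k h bB -> #|M| = h -> bB = complete_minus_clique M ->
  ambiguous (molecule_rel h bB) k.
Proof.
move=> mol cardM bB_def; subst h; rewrite -(imset_enum_val M) in bB_def.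
exact: (complete_minus_clique_ambiguous (@enum_val_inj _ (mem M)) mol bB_def).
Qed.

Lemma complete_minus_clique3P (h : nat) (bB : {set {set 'I_3}}) :
  1 <= h -> (forall E, E \in bB -> #|E| = 2) ->
  (exists2 M : {set 'I_3}, #|M| = h & bB = complete_minus_clique M) <->
  [\/ #|bB| = 3 /\ h = 1, #|bB| = 2 /\ h = 2 | #|bB| = 0 /\ h = 3].
Proof.
move=> h_gt0 pairs; split.
  case=> M cardM ->; rewrite card_complete_minus_clique card_ord cardM.
  have := max_card M; rewrite card_ord cardM.
  by case: h h_gt0 {cardM} => [|[|[|[|]]]] // _ _; [apply: Or31 | apply: Or32 | apply: Or33].
case=> [[cardB ->]|[cardB ->]|[cardB ->]].
- exists [set ord0]; first exact: cards1.
  apply: eq_complete_minus_clique_card; rewrite ?cards1 ?card_ord //.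
  by move=> E /pairs cardE; apply/negP=> /subset_leq_card; rewrite cards1 cardE.
- have sub_pairs : bB \subset [set E : {set 'I_3} | #|E| == 2].
    by apply/subsetP=> E /pairs cardE; rewrite inE cardE.
  have /cards1P[P missing] : #|[set E : {set 'I_3} | #|E| == 2] :\: bB| == 1.
    by rewrite cardsDS // card_draws card_ord cardB.
  have /setDP[] : P \in [set E : {set 'I_3} | #|E| == 2] :\: bB by rewrite missing set11.
  rewrite inE => /eqP cardP PnotB; exists P => //.
  apply: eq_complete_minus_clique_card; rewrite ?cardP ?card_ord ?cardB //.
  move=> E EB; apply: contra PnotB => sub_EP.
  suff <- : E = P by [].
  by apply/eqP; rewrite eqEcard sub_EP cardP pairs.
- exists setT; first by rewrite cardsT card_ord.
  rewrite (cards0_eq cardB).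
  by apply: eq_complete_minus_clique_card => [E|E|]; rewrite ?inE ?cards0 ?cardsT ?card_ord.
Qed.

Theorem mainTheorem6 (h : nat) (bB : {set {set 'I_3}}) :
  is_molecule 3 h bB ->
  (ambiguous (molecule_rel h bB) 3 <->
     [\/ #|bB| = 3 /\ h = 1, #|bB| = 2 /\ h = 2 | #|bB| = 0 /\ h = 3]).
Proof.
move=> mol; have [_ h_gt0 pairs _] := mol.
rewrite -(complete_minus_clique3P h_gt0 pairs); split.
- exact: ambiguous3_complete_minus_clique.
- by case=> M; apply: ambiguous_of_complete_minus_clique.
Qed.
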